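(* Let $N\ge 2$ and for $0\le k\le\lfloor N/2\rfloor$ let $\mathcal I_k$ be the set of $k$-element subsets $I\subset\mathbb{Z}_N$ such that $i\not\equiv i'+1\pmod N$ for all $i,i'\in I$ (so $|\mathcal I_0|=1$). Then for every $j$ with $1\le j\le\lfloor N/2\rfloor$, $$\sum_{k=0}^{j}(-1)^k\,|\mathcal I_k|\binom{N-2k}{j-k}=0 .$$ *)

From mathcomp Require Import all_boot all_order all_algebra.
Set Implicit Arguments. Unset Strict Implicit. Unset Printing Implicit Defensive.
Import GRing.Theory Num.Theory.

(* Z_N is modelled by 'I_N (residues 0..N-1); "i = i' + 1 (mod N)" is
   (i : nat) == (i' + 1) %% N. *)
Definition cyc_indep (N k : nat) : {set {set 'I_N}} :=
  [set I : {set 'I_N} | (#|I| == k) &&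
     [forall i in I, forall i' in I, (i : nat) != (i' + 1) %% N]].

From mathcomp Require Import all_boot all_order all_algebra.
From mathcomp Require Import zify.
Import GRing.Theory Num.Theory.
Set Implicit Arguments. Unset Strict Implicit. Unset Printing Implicit Defensive.
Local Open Scope ring_scope.

(* The sum is the count of pairs (I, S), weighted by (-1)^|I|, with I
   cyclically independent, S a set of "free" positions (neither in I nor right
   after an element of I) and |I| + |S| = j: for |I| = k there are
   C(N - 2k, j - k) choices of S.  As long as 0 < j < N some position v lies
   in I, or lies in S while v + 1 lies in neither I nor S; moving the first
   such v from I to S or back is a sign-reversing involution on these pairs,
   so the weighted count vanishes. *)

Lemma sum_sign_reversing_involution (R : numDomainType) (T : finType)
    (P : pred T) (g : T -> T) (F : T -> R) :
  involutive g -> (forall x, P x -> P (g x)) ->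
  (forall x, P x -> F (g x) = - F x) -> \sum_(x | P x) F x = 0.
Proof.
move=> gK Pg Fg; set s := \sum_(x | P x) F x.
have s_opp : s = - s.
  rewrite {1}/s (reindex_inj (inv_inj gK)) -sumrN /=.
  apply: eq_big => [x|x /Pg]; last by rewrite gK => /Fg.
  by apply/idP/idP => /Pg; rewrite ?gK.
apply/eqP; have := mulrn_eq0 s 2.
by rewrite mulr2n {2}s_opp subrr eqxx.
Qed.

Section CyclicIndependentSets.

Variable N : nat.
Variable j : nat.
Implicit Types (I S : {set 'I_N}) (x : {set 'I_N} * {set 'I_N}) (u v : 'I_N).

Definition indep I := [forall i in I, ordS i \notin I].

Definition free_slots I := [set i | (i \notin I) && (ord_pred i \notin I)].

Lemma indepP I i : indep I -> i \in I -> ordS i \notin I.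
Proof. by move/forall_inP; apply. Qed.

Lemma cyc_indepE k I : (I \in cyc_indep N k) = (#|I| == k) && indep I.
Proof.
rewrite inE; congr (_ && _).
apply/forall_inP/forall_inP => indepI i iI.
  apply/negP => /indepI /forall_inP /(_ i iI).
  by rewrite addn1 eqxx.
apply/forall_inP => i' i'I; apply/negP => /eqP i_eq.
have ordS_i' : ordS i' = i by apply: val_inj; rewrite /= i_eq addn1.
by move: (indepI i' i'I); rewrite ordS_i' iI.
Qed.

Lemma card_free_slots I : indep I -> #|free_slots I| = (N - 2 * #|I|)%N.
Proof.
move=> indepI.
have -> : free_slots I = ~: (I :|: (@ord_pred N) @^-1: I).
  by apply/setP => i; rewrite !inE negb_or.
have disjoint_pred : I :&: (@ord_pred N) @^-1: I = set0.
  apply/setP => i; rewrite !inE; apply/negP => /andP[iI pI].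
  by move: (indepP indepI pI); rewrite ord_predK iI.
have := cardsUI I ((@ord_pred N) @^-1: I).
rewrite disjoint_pred cards0 addn0 card_preimset; last exact: ord_pred_inj.
by move=> card_union; rewrite cardsCs setCK card_ord card_union; lia.
Qed.

Definition config x :=
  [&& indep x.1, x.2 \subset free_slots x.1 & #|x.1| + #|x.2| == j]%N.

Lemma configP I S : config (I, S) ->
  [/\ indep I, {in S, forall i, i \notin I},
      {in S, forall i, ord_pred i \notin I} & #|I| + #|S| = j]%N.
Proof.
case/and3P=> indepI /subsetP subS /eqP cardIS; split=> // i /subS;
  by rewrite inE => /andP[].
Qed.

Lemma card_config_fibre I : indep I -> (#|I| <= j)%N ->
  #|[set S | config (I, S)]| = 'C(N - 2 * #|I|, j - #|I|).
Proof.
move=> indepI le_Ij; rewrite -card_free_slots // -cards_draws.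
congr #|pred_of_set _|; apply/setP => S; rewrite !inE /config /= indepI /=.
by rewrite -{1}(subnKC le_Ij) eqn_add2l.
Qed.

Lemma sum_sign_config_by_size (R : ringType) :
  \sum_(x | config x) (-1) ^+ #|x.1| =
  \sum_(k < j.+1) (-1) ^+ k * (#|cyc_indep N k| * 'C(N - 2 * k, j - k))%:R :> R.
Proof.
pose small I := indep I && (#|I| <= j)%N.
have config_small x : config x = small x.1 && config x.
  case: x => I S; rewrite /small andb_idl // => cfg.
  by have [-> _ _ <-] := configP cfg; rewrite leq_addr.
rewrite (eq_bigl _ _ config_small).
rewrite -(pair_big_dep small (fun I S => config (I, S)) (fun I _ => (-1) ^+ #|I|)) /=.
transitivity (\sum_(I | small I) (-1) ^+ #|I| * 'C(N - 2 * #|I|, j - #|I|)%:R : R).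
  apply: eq_bigr => I /andP[indepI le_Ij].
  by rewrite sumr_const -(card_config_fibre indepI le_Ij) cardsE mulr_natr.
rewrite (partition_big (fun I => inord #|I| : 'I_j.+1) xpredT) //.
apply: eq_bigr => k _.
have sizeE I : small I && (inord #|I| == k) = (I \in cyc_indep N k).
  rewrite cyc_indepE /small; case: (leqP #|I| j) => [le_Ij|lt_jI].
    by rewrite -val_eqE /= inordK ?ltnS // andbT andbC.
  by rewrite andbF (gtn_eqF (leq_trans (ltn_ord k) lt_jI)).
rewrite (eq_bigl _ _ sizeE) (eq_bigr (fun=> (-1) ^+ k * 'C(N - 2 * k, j - k)%:R)).
  by rewrite sumr_const -mulrnAr -mulrnA mulnC.
by move=> I; rewrite cyc_indepE => /andP[/eqP ->].
Qed.

Lemma ordS_closed_setT S v : v \in S ->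
  (forall u, u \in S -> ordS u \in S) -> S = [set: 'I_N].
Proof.
move=> vS closedS; apply/setP => u; rewrite inE.
have iter_ordS m : val (iter m (@ordS N) v) = ((v + m) %% N)%N.
  elim: m => [|m IH] /=; first by rewrite addn0 modn_small.
  by rewrite IH -addn1 modnDml addn1 addnS.
have -> : u = iter (N - v + u)%N (@ordS N) v.
  apply: val_inj; rewrite iter_ordS.
  have ltuN := ltn_ord u; have ltvN := ltn_ord v.
  have -> : (v + (N - v + u) = u + N)%N by lia.
  by rewrite modnDr modn_small.
by elim: (N - v + u)%N => //= m; apply: closedS.
Qed.

Definition movable x v :=
  (v \in x.1) || [&& v \in x.2, ordS v \notin x.2 & ordS v \notin x.1].

Definition move_at x v :=
  if v \in x.1 then (x.1 :\ v, v |: x.2) else (v |: x.1, x.2 :\ v).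

Lemma sign_move_at (R : ringType) x v :
  (-1) ^+ #|(move_at x v).1| = - (-1) ^+ #|x.1| :> R.
Proof.
case: x => I S; rewrite /move_at /=; case: ifP => vI /=.
  by rewrite [in RHS](cardsD1 v I) vI exprS mulN1r opprK.
by rewrite cardsU1 vI exprS mulN1r.
Qed.

Hypothesis N_gt1 : (1 < N)%N.

Lemma ordS_neq v : ordS v != v.
Proof.
apply/eqP => /(congr1 val) /=; have := ltn_ord v.
case: (ltnP v.+1 N) => [ltvN _|geN ltvN]; first by rewrite modn_small //; lia.
have -> : v.+1 = N by lia.
by rewrite modnn; lia.
Qed.

Lemma config_move_at x v : config x -> movable x v -> config (move_at x v).
Proof.
case: x => I S cfg; have [indepI freeI predI cardIS] := configP cfg.
rewrite /movable /move_at /=; case: ifP => vI /= => [_|/and3P[vS sS sI]].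
  have vS : v \notin S by apply/negP => /freeI; rewrite vI.
  apply/and3P; split.
  - apply/forall_inP => i; rewrite !inE => /andP[_ iI].
    by rewrite negb_and (indepP indepI iI) orbT.
  - apply/subsetP => i; rewrite !inE => /predU1P[->|iS].
      rewrite eqxx /=; apply/negP => /andP[_ pI].
      by move: (indepP indepI pI); rewrite ord_predK vI.
    by rewrite !negb_and freeI ?predI ?orbT.
  - by rewrite /= -cardIS (cardsD1 v I) vI cardsU1 vS addnCA addnA.
apply/and3P; split.
- apply/forall_inP => i; rewrite !inE => /predU1P[->|iI].
    by rewrite negb_or ordS_neq.
  rewrite negb_or (indepP indepI iI) andbT; apply/eqP => ordS_i.
  by move: (predI _ vS); rewrite -ordS_i ordSK iI.
- apply/subsetP => i; rewrite !inE => /andP[iv iS].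
  rewrite !negb_or iv freeI ?predI //= andbT; apply/eqP => pred_i.
  by move: sS; rewrite -pred_i ord_predK iS.
- by rewrite /= -cardIS (cardsD1 v S) vS cardsU1 vI addnCA addnA.
Qed.

Lemma movable_move_at x v :
  config x -> movable x v -> movable (move_at x v) =1 movable x.
Proof.
case: x => I S cfg; have [indepI freeI predI _] := configP cfg.
rewrite /movable /move_at /=; case: ifP => vI /= => [_|/and3P[vS sS sI]] u /=.
  have vS : v \notin S by apply/negP => /freeI; rewrite vI.
  have sS : ordS v \notin S by apply/negP => /predI; rewrite ordSK vI.
  rewrite !inE; have [->|uv] := eqVneq u v.
    by rewrite vI (negbTE (ordS_neq v)) (negbTE sS) (negbTE (indepP indepI vI)).
  by have [->|] := eqVneq (ordS u) v; rewrite ?vI /= ?andbF.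
rewrite !inE; have [->|uv] := eqVneq u v; first by rewrite vI vS sS sI.
by have [->|] := eqVneq (ordS u) v; rewrite ?vI ?vS /= ?andbF.
Qed.

Lemma move_atK x v : config x -> movable x v -> move_at (move_at x v) v = x.
Proof.
case: x => I S cfg; have [_ freeI _ _] := configP cfg.
rewrite /movable /move_at /=; have [vI _|vI /and3P[vS _ _]] := boolP (v \in I).
  have vS : v \notin S by apply/negP => /freeI; rewrite vI.
  by rewrite /= !inE eqxx /= setD1K // setU1K.
by rewrite /= !inE eqxx /= setU1K // setD1K.
Qed.

Definition move_first x :=
  if config x then
    if [pick v | movable x v] is Some v then move_at x v else x
  else x.

Hypothesis j_range : (0 < j < N)%N.

Lemma exists_movable x : config x -> exists v, movable x v.
Proof.
case: x => I S cfg; have /andP[j_gt0 j_ltN] := j_range.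
have [_ _ _ cardIS] := configP cfg.
have [I0|[v vI]] := set_0Vmem I; last by exists v; rewrite /movable vI.
rewrite I0 cards0 add0n in cardIS.
have [v vS] : exists v, v \in S by apply/set0Pn; rewrite -card_gt0 cardIS.
apply/existsP; apply: contraTT j_ltN; rewrite -cardIS => /existsPn unmovable.
suff -> : S = [set: 'I_N] by rewrite cardsT card_ord ltnn.
apply: (ordS_closed_setT vS) => u uS; move: (unmovable u).
by rewrite /movable I0 !inE uS andbT negbK.
Qed.

Lemma pick_movable x : config x ->
  exists2 v, [pick u | movable x u] = Some v & movable x v.
Proof.
move=> cfg; case: pickP => [v mv|unmovable]; first by exists v.
by have [v] := exists_movable cfg; rewrite unmovable.
Qed.

Lemma config_move_first x : config x -> config (move_first x).
Proof.
move=> cfg; have [v pick_v mv] := pick_movable cfg.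
by rewrite /move_first cfg pick_v config_move_at.
Qed.

Lemma move_firstK : involutive move_first.
Proof.
move=> x; case cfg: (config x); last by rewrite /move_first cfg cfg.
have [v pick_v mv] := pick_movable cfg.
(* Moving v changes the movability of no position, so v is picked again. *)
rewrite {2}/move_first cfg pick_v /move_first config_move_at //.
by rewrite (eq_pick (movable_move_at cfg mv)) pick_v (move_atK cfg mv).
Qed.

Lemma sign_move_first (R : ringType) x : config x ->
  (-1) ^+ #|(move_first x).1| = - (-1) ^+ #|x.1| :> R.
Proof.
move=> cfg; have [v pick_v _] := pick_movable cfg.
by rewrite /move_first cfg pick_v sign_move_at.
Qed.

Lemma sum_sign_config (R : numDomainType) :
  \sum_(x | config x) (-1) ^+ #|x.1| = 0 :> R.
Proof.
apply: (sum_sign_reversing_involution move_firstK).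
  exact: config_move_first.
exact: sign_move_first.
Qed.

End CyclicIndependentSets.

Theorem mainTheorem2 (N j : nat) (hN : (2 <= N)%N) (hj1 : (1 <= j)%N)
  (hj2 : (j <= N./2)%N) :
  \sum_(0 <= k < j.+1) (-1) ^+ k * (#|cyc_indep N k| * 'C(N - 2 * k, j - k))%:R
    = 0 :> int.
Proof.
have j_range : (0 < j < N)%N.
  by rewrite hj1 /=; move: hj2; rewrite geq_half_double -addnn; lia.
by rewrite big_mkord -sum_sign_config_by_size (sum_sign_config hN j_range).
Qed.
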